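(* Let $(X,d)$ be a geometrically doubling metric space and let $\mathscr{D}=\{Q^k_\alpha\}$ be a system of dyadic cubes with parameters $\delta\in(0,1)$ and $0<c_1\le C_1<\infty$. Let $m\in\mathbb{Z}$ and let $Q^m_\alpha\in\mathscr{D}$ be a dyadic cube of generation $m$. Then both $Q^m_\alpha$ and $X\setminus Q^m_\alpha$ are d-plump with parameters $\delta$, $m$, $b_0=c_1$ and $B_0=c_1+C_1$. In particular (provided $\operatorname{diam}(Q^m_\alpha)>0$), $Q^m_\alpha$ is plump with parameters $$b=\frac{\delta c_1}{c_1+C_1}\quad\text{and}\quad R=\frac{c_1+C_1}{2\delta C_1}\operatorname{diam}(Q^m_\alpha).$$
   Context: For $x\in X$ and $r>0$, $B(x,r)=\{y\in X: d(y,x)<r\}$. $(X,d)$ is geometrically doubling if there is $A_1\in\mathbb{N}$ such that every ball $B(x,r)$ can be covered by at most $A_1$ balls of radius $r/2$. A system of dyadic cubes with parameters $\delta\in(0,1)$ and $0<c_1\le C_1<\infty$ is a family of Borel sets $Q^k_\alpha$, $k\in\mathbb{Z}$, $\alpha\in I(k)$ (with $I(k)$ at most countable), together with points $x^k_\alpha\in X$, such that: (i) for every $k$, $X=\bigcup_{\alpha\in I(k)}Q^k_\alpha$ as a disjoint union; (ii) if $\ell\ge k$ then either $Q^\ell_\beta\subseteq Q^k_\alpha$ or $Q^\ell_\beta\cap Q^k_\alpha=\emptyset$; (iii) $B(x^k_\alpha,c_1\delta^k)\subseteq Q^k_\alpha\subseteq B(x^k_\alpha,C_1\delta^k)=:B(Q^k_\alpha)$;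 (iv) if $\ell\ge k$ and $Q^\ell_\beta\subseteq Q^k_\alpha$ then $B(Q^\ell_\beta)\subseteq B(Q^k_\alpha)$. $Q^k_\alpha$ is called a dyadic cube of generation $k$. A set $E\subseteq X$ is plump with parameters $R>0$, $b\in(0,1)$ if for all $y\in E$ and $0<r\le R$ there is $z\in X$ with $B(z,br)\subseteq B(y,r)\cap E$. A set $E$ is d-plump with parameters $\delta\in(0,1)$, $m\in\mathbb{Z}$, $0<b_0\le B_0<\infty$ if for all $y\in E$ and all integers $k\ge m$ there is $z\in X$ with $B(z,b_0\delta^k)\subseteq B(y,B_0\delta^k)\cap E$. *)

From Stdlib Require Import Reals List ZArith.
Open Scope R_scope.

Definition ball {X : Type} (d : X -> X -> R) (x : X) (r : R) : X -> Prop :=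
  fun y => d y x < r.

Definition is_metric {X : Type} (d : X -> X -> R) : Prop :=
  (forall x y, 0 <= d x y) /\
  (forall x y, d x y = 0 <-> x = y) /\
  (forall x y, d x y = d y x) /\
  (forall x y z, d x z <= d x y + d y z).

Definition geom_doubling {X : Type} (d : X -> X -> R) : Prop :=
  exists A1 : nat, forall (x : X) (r : R), 0 < r ->
    exists l : list X, (length l <= A1)%nat /\
      forall y, ball d x r y -> exists z, In z l /\ ball d z (r / 2) y.

Definition is_open {X : Type} (d : X -> X -> R) (U : X -> Prop) : Prop :=
  forall x, U x -> exists r, 0 < r /\ forall y, ball d x r y -> U y.

(* Borel sets: members of every sigma-algebra (of extensional predicates)
   containing the open sets. *)
Definition borel {X : Type} (d : X -> X -> R) (A : X -> Prop) : Prop :=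
  forall F : (X -> Prop) -> Prop,
    (forall B C : X -> Prop, (forall x, B x <-> C x) -> F B -> F C) ->
    (forall U, is_open d U -> F U) ->
    (forall B, F B -> F (fun x => ~ B x)) ->
    (forall S : nat -> X -> Prop, (forall n, F (S n)) -> F (fun x => exists n, S n x)) ->
    F A.

Definition dyadic_system {X : Type} (d : X -> X -> R) (I : Z -> Type)
  (Q : forall k : Z, I k -> X -> Prop) (xc : forall k : Z, I k -> X)
  (delta c1 C1 : R) : Prop :=
  (0 < delta < 1) /\ (0 < c1) /\ (c1 <= C1) /\
  (forall k, exists f : I k -> nat, forall a b, f a = f b -> a = b) /\
  (forall k a, borel d (Q k a)) /\
  (forall k (y : X), exists a, Q k a y /\ forall b, Q k b y -> b = a) /\
  (forall (k l : Z) (a : I k) (b : I l), (k <= l)%Z ->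
     (forall y, Q l b y -> Q k a y) \/ (forall y, ~ (Q l b y /\ Q k a y))) /\
  (forall k a y, ball d (xc k a) (c1 * powerRZ delta k) y -> Q k a y) /\
  (forall k a y, Q k a y -> ball d (xc k a) (C1 * powerRZ delta k) y) /\
  (forall (k l : Z) (a : I k) (b : I l), (k <= l)%Z ->
     (forall y, Q l b y -> Q k a y) ->
     forall y, ball d (xc l b) (C1 * powerRZ delta l) y ->
               ball d (xc k a) (C1 * powerRZ delta k) y).

Definition plump {X : Type} (d : X -> X -> R) (E : X -> Prop) (Rr b : R) : Prop :=
  0 < Rr /\ 0 < b < 1 /\
  forall y, E y -> forall r, 0 < r <= Rr ->
    exists z, forall w, ball d z (b * r) w -> ball d y r w /\ E w.

Definition d_plump {X : Type} (d : X -> X -> R) (E : X -> Prop)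
  (delta : R) (m : Z) (b0 B0 : R) : Prop :=
  0 < delta < 1 /\ 0 < b0 <= B0 /\
  forall y, E y -> forall k : Z, (m <= k)%Z ->
    exists z, forall w, ball d z (b0 * powerRZ delta k) w ->
                        ball d y (B0 * powerRZ delta k) w /\ E w.

Definition is_diam {X : Type} (d : X -> X -> R) (E : X -> Prop) (D : R) : Prop :=
  is_lub (fun t => exists y z, E y /\ E z /\ t = d y z) D.

From Stdlib Require Import Reals ZArith Lra Lia.
Open Scope R_scope.

(* Proof of Proposition 3.1.
   Call a set E "saturated from generation m" if every dyadic cube of
   generation k >= m meeting E lies inside E.  For such E, d-plumpness is
   witnessed by centres of cubes: if y lies in the cube Q of generation k,
   then B(x_Q, c1 delta^k) is contained in Q (hence in E) and, since
   d(y, x_Q) < C1 delta^k, also in B(y, (c1 + C1) delta^k).  By the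
   nestedness axiom, both Q^m_a and its complement are saturated from
   generation m, which gives the two d-plumpness claims.
   Plumpness then follows from a general fact: a d-plump set with parameters
   (delta, m, b0, B0) is plump with b = delta b0 / B0 at every scale
   r <= B0 delta^(m-1), by choosing the generation k >= m with
   B0 delta^k <= r <= B0 delta^(k-1).  Finally diam Q^m_a <= 2 C1 delta^m
   shows that R = (c1 + C1) D / (2 delta C1) is such an admissible scale. *)

Lemma between_consecutive_powers (delta t : R) : 0 < delta < 1 -> 0 < t <= 1 ->
  exists n : nat, delta ^ S n <= t <= delta ^ n.
Proof.
  intros Hd Ht.
  assert (Hsmall : exists N, delta ^ N <= t).
  { destruct (pow_lt_1_zero delta) with (y := t) as [N HN];
      [rewrite Rabs_right; lra | lra |].
    exists N. specialize (HN N (le_n N)).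
    rewrite Rabs_right in HN; [lra | apply Rle_ge, pow_le; lra]. }
  destruct Hsmall as [N HN]. induction N as [|N IH].
  - exists 0%nat. simpl in *. lra.
  - destruct (Rle_lt_dec t (delta ^ N)) as [h|h].
    + exists N. lra.
    + apply IH. lra.
Qed.

Lemma choose_generation (delta s : R) (m : Z) : 0 < delta < 1 ->
  0 < s <= powerRZ delta (m - 1) ->
  exists k : Z, (m <= k)%Z /\ powerRZ delta k <= s <= powerRZ delta (k - 1).
Proof.
  intros Hd Hs.
  assert (Hp : 0 < powerRZ delta (m - 1)) by (apply powerRZ_lt; lra).
  assert (Ht : 0 < s / powerRZ delta (m - 1) <= 1).
  { split.
    - apply Rdiv_lt_0_compat; lra.
    - apply Rmult_le_reg_r with (powerRZ delta (m - 1)); [lra|].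
      field_simplify; lra. }
  destruct (between_consecutive_powers _ _ Hd Ht) as [n Hn].
  assert (Hpow : forall j : nat,
            powerRZ delta (m - 1 + Z.of_nat j) = powerRZ delta (m - 1) * delta ^ j).
  { intro j. rewrite powerRZ_add, pow_powerRZ by lra. reflexivity. }
  exists (m + Z.of_nat n)%Z. split; [lia|].
  replace (m + Z.of_nat n)%Z with (m - 1 + Z.of_nat (S n))%Z by lia.
  replace (m - 1 + Z.of_nat (S n) - 1)%Z with (m - 1 + Z.of_nat n)%Z by lia.
  rewrite !Hpow.
  assert (Hss : s = powerRZ delta (m - 1) * (s / powerRZ delta (m - 1)))
    by (field; lra).
  rewrite Hss. split; apply Rmult_le_compat_l; lra.
Qed.

Lemma d_plump_plump {X : Type} (d : X -> X -> R) (E : X -> Prop)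
    (delta : R) (m : Z) (b0 B0 Rr : R) :
  d_plump d E delta m b0 B0 -> 0 < Rr <= B0 * powerRZ delta (m - 1) ->
  plump d E Rr (delta * b0 / B0).
Proof.
  intros [Hd [Hb Hplump]] HR.
  split; [lra | split].
  { split.
    - apply Rdiv_lt_0_compat; nra.
    - apply Rmult_lt_reg_r with B0; [lra|]. field_simplify; nra. }
  intros y Hy r Hr.
  destruct (choose_generation delta (r / B0) m Hd) as [k [Hkm [Hlo Hhi]]].
  { split.
    - apply Rdiv_lt_0_compat; lra.
    - apply Rmult_le_reg_r with B0; [lra|]. field_simplify; lra. }
  assert (Hpk : powerRZ delta k = delta * powerRZ delta (k - 1)).
  { replace k with (k - 1 + 1)%Z at 1 by lia.
    rewrite powerRZ_add by lra. simpl. ring. }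
  assert (Hinner : delta * b0 / B0 * r <= b0 * powerRZ delta k).
  { rewrite Hpk.
    replace (delta * b0 / B0 * r) with (delta * b0 * (r / B0)) by (field; lra).
    replace (b0 * (delta * powerRZ delta (k - 1)))
      with (delta * b0 * powerRZ delta (k - 1)) by ring.
    apply Rmult_le_compat_l; nra. }
  assert (Houter : B0 * powerRZ delta k <= r).
  { replace r with (B0 * (r / B0)) by (field; lra).
    apply Rmult_le_compat_l; lra. }
  destruct (Hplump y Hy k Hkm) as [z Hz]. exists z. intros w Hw.
  destruct (Hz w) as [Hwy HwE]; [unfold ball in *; lra|].
  split; [unfold ball in *; lra | exact HwE].
Qed.

Section DyadicCubes.

Variables (X : Type) (d : X -> X -> R).
Hypothesis d_sym : forall x y, d x y = d y x.
Hypothesis d_tri : forall x y z, d x z <= d x y + d y z.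

Variables (I : Z -> Type) (Q : forall k : Z, I k -> X -> Prop)
  (xc : forall k : Z, I k -> X) (delta c1 C1 : R).
Hypothesis Hdelta : 0 < delta < 1.
Hypothesis Hc1 : 0 < c1.
Hypothesis Hc1C1 : c1 <= C1.
Hypothesis cube_cover : forall k (y : X), exists a, Q k a y /\ forall b, Q k b y -> b = a.
Hypothesis cube_nested : forall (k l : Z) (a : I k) (b : I l), (k <= l)%Z ->
  (forall y, Q l b y -> Q k a y) \/ (forall y, ~ (Q l b y /\ Q k a y)).
Hypothesis cube_inner_ball : forall k a y,
  ball d (xc k a) (c1 * powerRZ delta k) y -> Q k a y.
Hypothesis cube_outer_ball : forall k a y,
  Q k a y -> ball d (xc k a) (C1 * powerRZ delta k) y.

Definition saturated_from (m : Z) (E : X -> Prop) : Prop :=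
  forall (k : Z) (b : I k) y, (m <= k)%Z -> Q k b y -> E y ->
    forall w, Q k b w -> E w.

Lemma inner_ball_near_point (k : Z) (b : I k) (y : X) : Q k b y ->
  forall w, ball d (xc k b) (c1 * powerRZ delta k) w ->
    ball d y ((c1 + C1) * powerRZ delta k) w /\ Q k b w.
Proof.
  intros Hy w Hw. split; [|exact (cube_inner_ball k b w Hw)].
  pose proof (cube_outer_ball k b y Hy) as Hyc.
  unfold ball in *. pose proof (d_tri w (xc k b) y) as Htri.
  rewrite (d_sym (xc k b) y) in Htri. lra.
Qed.

(* Saturated sets are d-plump: the witness at generation k is the centre of
   the k-cube containing y. *)
Lemma saturated_d_plump (m : Z) (E : X -> Prop) :
  saturated_from m E -> d_plump d E delta m c1 (c1 + C1).
Proof.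
  intros Hsat. split; [exact Hdelta | split; [lra|]].
  intros y Hy k Hk.
  destruct (cube_cover k y) as [b [Hb _]]. exists (xc k b). intros w Hw.
  destruct (inner_ball_near_point k b y Hb w Hw) as [Hwy Hwb].
  split; [exact Hwy | exact (Hsat k b y Hk Hb Hy w Hwb)].
Qed.

Lemma cube_saturated (m : Z) (a : I m) : saturated_from m (Q m a).
Proof.
  intros k b y Hk Hby Hay w Hbw.
  destruct (cube_nested m k a b Hk) as [Hsub|Hdisj].
  - exact (Hsub w Hbw).
  - exfalso. exact (Hdisj y (conj Hby Hay)).
Qed.

Lemma cube_complement_saturated (m : Z) (a : I m) :
  saturated_from m (fun y => ~ Q m a y).
Proof.
  intros k b y Hk Hby Hny w Hbw Haw.
  destruct (cube_nested m k a b Hk) as [Hsub|Hdisj].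
  - exact (Hny (Hsub y Hby)).
  - exact (Hdisj w (conj Hbw Haw)).
Qed.

Lemma cube_diam_le (m : Z) (a : I m) (D : R) :
  is_diam d (Q m a) D -> D <= 2 * C1 * powerRZ delta m.
Proof.
  intros [_ Hleast]. apply Hleast. intros t [y [z [Hy [Hz ->]]]].
  pose proof (cube_outer_ball m a y Hy) as Hyc.
  pose proof (cube_outer_ball m a z Hz) as Hzc.
  unfold ball in *. pose proof (d_tri y (xc m a) z) as Htri.
  rewrite (d_sym (xc m a) z) in Htri. lra.
Qed.

Lemma plump_scale_admissible (m : Z) (D : R) :
  0 < D -> D <= 2 * C1 * powerRZ delta m ->
  0 < (c1 + C1) / (2 * delta * C1) * D <= (c1 + C1) * powerRZ delta (m - 1).
Proof.
  intros HD HDle.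
  assert (Hpk : powerRZ delta m = delta * powerRZ delta (m - 1)).
  { replace m with (m - 1 + 1)%Z at 1 by lia.
    rewrite powerRZ_add by lra. simpl. ring. }
  assert (Hp : 0 < powerRZ delta (m - 1)) by (apply powerRZ_lt; lra).
  assert (Hden : 0 < 2 * delta * C1) by nra.
  split.
  - apply Rmult_lt_0_compat; [apply Rdiv_lt_0_compat|]; lra.
  - replace ((c1 + C1) / (2 * delta * C1) * D)
      with ((c1 + C1) * (D / (2 * delta * C1))) by (field; lra).
    apply Rmult_le_compat_l; [lra|].
    apply Rmult_le_reg_r with (2 * delta * C1); [lra|].
    field_simplify; [nra | lra].
Qed.

End DyadicCubes.

Theorem proposition3p1 (X : Type) (d : X -> X -> R) (I : Z -> Type)
  (Q : forall k : Z, I k -> X -> Prop) (xc : forall k : Z, I k -> X)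
  (delta c1 C1 : R) :
  is_metric d -> geom_doubling d -> dyadic_system d I Q xc delta c1 C1 ->
  forall (m : Z) (a : I m),
    d_plump d (Q m a) delta m c1 (c1 + C1) /\
    d_plump d (fun y => ~ Q m a y) delta m c1 (c1 + C1) /\
    (forall D : R, is_diam d (Q m a) D -> 0 < D ->
       plump d (Q m a) ((c1 + C1) / (2 * delta * C1) * D) (delta * c1 / (c1 + C1))).
Proof.
  intros [_ [_ [Hsym Htri]]] _ Hdy m a.
  destruct Hdy as (Hd & Hc1 & HC1 & _ & _ & Hcover & Hnest & Hinner & Houter & _).
  assert (Hcube : d_plump d (Q m a) delta m c1 (c1 + C1)).
  { eapply saturated_d_plump; eauto. eapply cube_saturated; eauto. }
  split; [exact Hcube | split].
  - eapply saturated_d_plump; eauto. eapply cube_complement_saturated; eauto.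
  - intros D HD HDpos.
    apply (d_plump_plump d (Q m a) delta m c1 (c1 + C1)); [exact Hcube|].
    apply plump_scale_admissible; [assumption .. |].
    eapply cube_diam_le; eauto.
Qed.
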